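(* Let $n,m \in \mathbb{N}$, $a \in \Delta_n^+$, $b \in \Delta_m^+$, and $\lambda > 0$. Define $\Phi_\lambda \colon \mathbb{R}^{n\times m} \to \Pi_{a,b}^+$ by \[ \Phi_\lambda(C) = \operatorname{argmin}_{\pi \in \Pi_{a,b}} \big(\langle C, \pi\rangle + \lambda h(\pi)\big). \] Then for all $C_1, C_2 \in \mathbb{R}^{n\times m}$, \[ \|\Phi_\lambda(C_1) - \Phi_\lambda(C_2)\|_1 \le \frac{\|C_1 - C_2\|_\infty}{\lambda}. \]
   Context: $\Delta_n^+ := \{a \in \mathbb{R}^n : a_i > 0\ \forall i,\ \sum_i a_i = 1\}$. $\Pi_{a,b} := \{\pi \in \mathbb{R}_+^{n\times m} : \pi 1_m = a,\ \pi^\top 1_n = b\}$ and $\Pi_{a,b}^+$ is its subset of matrices with all entries strictly positive. $h(\pi) := \sum_{i,j}\pi_{ij}\log\frac{\pi_{ij}}{e}$ (with $0\log 0=0$); the minimizer defining $\Phi_\lambda(C)$ exists, is unique, and lies in $\Pi_{a,b}^+$. $\langle\cdot,\cdot\rangle$ is the Frobenius inner product; for a matrix $A$, $\|A\|_1 := \sum_{i,j}|A_{ij}|$ and $\|A\|_\infty := \max_{i,j}|A_{ij}|$. *)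

From HB Require Import structures.
From mathcomp Require Import all_boot all_order all_algebra.
From mathcomp Require Import all_classical all_reals all_analysis.
Set Implicit Arguments. Unset Strict Implicit. Unset Printing Implicit Defensive.
Import Order.TTheory GRing.Theory Num.Theory.
Local Open Scope ring_scope.

Definition simplex_pos (R : realType) (n : nat) (a : 'I_n -> R) : Prop :=
  (forall i, 0 < a i) /\ \sum_(i < n) a i = 1.

Definition Pi (R : realType) (n m : nat) (a : 'I_n -> R) (b : 'I_m -> R)
  (pi : 'M[R]_(n, m)) : Prop :=
  (forall i j, 0 <= pi i j) /\
  (forall i, \sum_(j < m) pi i j = a i) /\
  (forall j, \sum_(i < n) pi i j = b j).

Definition hent (R : realType) (n m : nat) (pi : 'M[R]_(n, m)) : R :=
  \sum_(i < n) \sum_(j < m)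
     (if pi i j == 0 then 0 else pi i j * ln (pi i j / expR 1)).

Definition frob (R : realType) (n m : nat) (A B : 'M[R]_(n, m)) : R :=
  \sum_(i < n) \sum_(j < m) A i j * B i j.

Definition norm1 (R : realType) (n m : nat) (A : 'M[R]_(n, m)) : R :=
  \sum_(i < n) \sum_(j < m) `|A i j|.

Definition norminf (R : realType) (n m : nat) (A : 'M[R]_(n, m)) : R :=
  \big[Num.max/0]_(i < n) \big[Num.max/0]_(j < m) `|A i j|.

Definition ent_obj (R : realType) (n m : nat) (lam : R) (C pi : 'M[R]_(n, m)) : R :=
  frob C pi + lam * hent pi.

Definition is_Phi (R : realType) (n m : nat) (a : 'I_n -> R) (b : 'I_m -> R)
  (lam : R) (C P : 'M[R]_(n, m)) : Prop :=
  Pi a b P /\ (forall pi, Pi a b pi -> ent_obj lam C P <= ent_obj lam C pi).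

From HB Require Import structures.
From mathcomp Require Import all_boot all_order all_algebra.
From mathcomp Require Import all_classical all_reals all_analysis.
From mathcomp Require Import ring lra.
Import Order.TTheory GRing.Theory Num.Theory.
Local Open Scope ring_scope.

(* Optimality of [P1] against the segment towards [P2] (and vice versa) gives
   first-order inequalities at interior mixtures [Q1], [Q2] of the two plans,
   where the logarithms are finite.  Added together they bound the Jeffreys
   divergence of [Q1] and [Q2], scaled by lambda, by the pairing of [C1 - C2]
   with [P2 - P1].  Pinsker's inequality, in the form "logarithmic mean <=
   arithmetic mean" followed by Cauchy-Schwarz, bounds that divergence below by
   the squared l1 distance, and Hoelder bounds the pairing by
   ||C1 - C2||_inf ||P1 - P2||_1.  Letting the mixtures tend to [P1], [P2]
   yields lambda ||P1 - P2||_1^2 <= ||C1 - C2||_inf ||P1 - P2||_1. *)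

Section scalar_inequalities.
Context {R : realType}.
Implicit Types x y p q r t k : R.

Lemma ln_le_subr1 {x} : 0 < x -> ln x <= x - 1.
Proof. by move=> x0; have := @le_ln1Dx R (x - 1); rewrite addrCA subrr addr0; apply; lra. Qed.

Definition hent_term x := if x == 0 then 0 else x * ln (x / expR 1).

Lemma hent_termE x : 0 <= x -> hent_term x = x * ln x - x.
Proof.
rewrite /hent_term le_eqVlt => /predU1P[<-|x0]; first by rewrite eqxx mul0r subr0.
by rewrite gt_eqF // ln_div ?posrE ?expR_gt0 // expRK mulrBr mulr1.
Qed.

Lemma hent_term_tangent {p y} : 0 <= p -> 0 < y ->
  hent_term y - hent_term p <= (y - p) * ln y.
Proof.
move=> p0 y0; rewrite !hent_termE ?(ltW y0) //.
have [->|pn0] := eqVneq p 0; first by rewrite mul0r !subr0; lra.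
have pp : 0 < p by rewrite lt_def pn0.
have := ler_wpM2l p0 (ln_le_subr1 (divr_gt0 y0 pp)).
rewrite ln_div ?posrE // mulrBr mulrBr mulr1 mulrCA divff ?mulr1 //.
lra.
Qed.

Lemma segment_gt0 {p q t} : 0 <= p -> 0 <= q -> 0 < t < 1 -> p != q ->
  0 < p + t * (q - p).
Proof.
move=> p0 q0 /andP[t0 t1] pq.
have -> : p + t * (q - p) = (1 - t) * p + t * q by ring.
have [p_0|pn0] := eqVneq p 0.
  by move: pq; rewrite p_0 mulr0 add0r eq_sym => qn0; rewrite mulr_gt0 // lt_def qn0.
have : 0 < p by rewrite lt_def pn0.
nra.
Qed.

Lemma hent_term_segment {p q t} : 0 <= p -> 0 <= q -> 0 < t < 1 ->
  hent_term (p + t * (q - p)) - hent_term p <= t * (q - p) * ln (p + t * (q - p)).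
Proof.
move=> p0 q0 t01.
have [->|pq] := eqVneq p q; first by rewrite subrr !(mulr0, mul0r) addr0 subrr.
have := hent_term_tangent p0 (segment_gt0 p0 q0 t01 pq).
by rewrite addrAC subrr add0r.
Qed.

Lemma ln_ge_2subr1_divDr1 r : 1 <= r -> 2 * (r - 1) / (r + 1) <= ln r.
Proof.
move=> r1.
pose g x := ln x + 4 * (x + 1)^-1.
have dg x : 0 < x -> is_derive x 1 g (x^-1 - 4 * (x + 1) ^- 2).
  move=> x0; rewrite /g; apply: is_derive_eq.
    apply: is_deriveD; first exact: is_derive1_ln.
    apply: is_deriveM.
    by apply: is_deriveV; rewrite gt_eqF // addr_gt0.
  by rewrite /= addr0 scaler0 addr0 /GRing.scale /= mulr1 mulrN.
have g_derivable x : 0 < x -> derivable g x 1 by move=> /dg/@ex_derive.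
have g_ndecr : g 1 <= g r.
  apply: (@ger0_derive1_ndecr _ g 1 r) => //.
  - move=> x; rewrite in_itv /= => /andP[x1 _].
    by apply: g_derivable; lra.
  - move=> x; rewrite in_itv /= => /andP[x1 _].
    have x0 : 0 < x by lra.
    rewrite derive1E (derive_val (is_derive := dg x x0)).
    have -> : x^-1 - 4 * (x + 1) ^- 2 = (x - 1) ^+ 2 / (x * (x + 1) ^+ 2).
      by field; rewrite !gt_eqF //; lra.
    by rewrite divr_ge0 ?sqr_ge0 // mulr_ge0 ?sqr_ge0 //; lra.
  - apply: derivable_within_continuous => x; rewrite in_itv /= => /andP[x1 _].
    by apply: g_derivable; lra.
have g1 : g 1 = 2 by rewrite /g ln1 add0r; field.
have -> : 2 * (r - 1) / (r + 1) = 2 - 4 * (r + 1)^-1 by field; rewrite gt_eqF //; lra.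
by move: g_ndecr; rewrite g1 /g; lra.
Qed.

Lemma logmean_le_mean {x y} : 0 < x -> 0 < y ->
  2 * (x - y) ^+ 2 <= (x - y) * (ln x - ln y) * (x + y).
Proof.
wlog yx : x y / y <= x.
  move=> wlog_yx x0 y0; have [/wlog_yx|/ltW/wlog_yx] := leP y x; first exact.
  by move=> /(_ y0 x0); congr (_ <= _); ring.
move=> x0 y0.
have xy0 : 0 < x + y by lra.
have := ln_ge_2subr1_divDr1 (x / y); rewrite ler_pdivlMr // mul1r ln_div ?posrE //.
have -> : 2 * (x / y - 1) / (x / y + 1) = 2 * (x - y) / (x + y).
  by field; rewrite !gt_eqF //; lra.
move=> /(_ yx) /(ler_wpM2r (ltW xy0)); rewrite mulrAC mulrK ?unitfE ?gt_eqF //.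
move=> /(ler_wpM2l (x := x - y)); rewrite subr_ge0 => /(_ yx).
by congr (_ <= _); ring.
Qed.

(* [logmean_le_mean] combined with AM-GM; summed over the entries with the
   optimal [k], this becomes Cauchy-Schwarz in [sqr_l1_le_jeffreys]. *)
Lemma subr_mul_lnB_ge k {x y} : 0 <= x -> 0 <= y -> x = y \/ 0 < x /\ 0 < y ->
  4 * k * `|x - y| - 2 * k ^+ 2 * (x + y) <= (x - y) * (ln x - ln y).
Proof.
move=> x0 y0 [<-|[xp yp]].
  by rewrite subrr normr0 mulr0 mul0r sub0r oppr_le0; have := sqr_ge0 k; nra.
have s0 : 0 < x + y by lra.
have := logmean_le_mean xp yp; rewrite -real_normK ?num_real //.
set L := (x - y) * _; set u := `|x - y|; set s := x + y in s0 * => Lu.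
rewrite -(ler_pM2r s0).
have : 0 <= 2 * (u - k * s) ^+ 2 by rewrite mulr_ge0 ?sqr_ge0.
have -> : 2 * (u - k * s) ^+ 2 = 2 * u ^+ 2 - (4 * k * u - 2 * k ^+ 2 * s) * s by ring.
lra.
Qed.

Definition jeffreys {I : finType} (x y : I -> R) :=
  \sum_i (x i - y i) * (ln (x i) - ln (y i)).

Lemma sqr_l1_le_jeffreys (I : finType) (x y : I -> R) :
  (forall i, 0 <= x i) -> (forall i, 0 <= y i) ->
  (forall i, x i = y i \/ 0 < x i /\ 0 < y i) ->
  \sum_i x i = 1 -> \sum_i y i = 1 ->
  (\sum_i `|x i - y i|) ^+ 2 <= jeffreys x y.
Proof.
move=> x0 y0 xy x1 y1; set D : R := \sum_i _.
apply: le_trans (ler_sum _ (fun i _ => subr_mul_lnB_ge (D / 2) (x0 i) (y0 i) (xy i))).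
rewrite sumrB -!mulr_sumr big_split /= x1 y1 -/D.
by rewrite [leRHS](_ : _ = D ^+ 2) //; field.
Qed.

End scalar_inequalities.

Lemma le_of_forall_mulr_le {F : realFieldType} (x y : F) :
  (forall s, 0 < s < 1 -> s * x <= y) -> x <= y.
Proof.
move=> sx_le; rewrite leNgt; apply/negP => yx.
have x_half : 2^-1 * x <= y by apply: sx_le; apply/andP; split; lra.
have x0 : 0 < x by lra.
have s01 : 0 < (x + y) / (2 * x) < 1.
  by rewrite divr_gt0 ?ltr_pdivrMr ?mulr_gt0 //=; lra.
have := sx_le _ s01.
have -> : (x + y) / (2 * x) * x = (x + y) / 2 by field; rewrite gt_eqF.
lra.
Qed.

Section matrix_norms.
Context {R : realType} {n m : nat}.
Implicit Types A B : 'M[R]_(n, m).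

Lemma norm1_ge0 A : 0 <= norm1 A.
Proof. by apply: sumr_ge0 => i _; apply: sumr_ge0. Qed.

Lemma norminf_ge0 A : 0 <= norminf A.
Proof. exact: bigmax_ge_id. Qed.

Lemma norminf_ge A i j : `|A i j| <= norminf A.
Proof. exact: bigmax_sup (le_bigmax _ _ j). Qed.

Lemma normr_frob_le A B : `|frob A B| <= norminf A * norm1 B.
Proof.
rewrite /frob /norm1 mulr_sumr; apply: le_trans (ler_norm_sum _ _ _) _.
apply: ler_sum => i _; rewrite mulr_sumr; apply: le_trans (ler_norm_sum _ _ _) _.
by apply: ler_sum => j _; rewrite normrM ler_wpM2r ?norminf_ge.
Qed.

End matrix_norms.

Section entropic_plans.
Context {R : realType} {n m : nat} {a : 'I_n -> R} {b : 'I_m -> R}.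
Implicit Types (C P : 'M[R]_(n, m)) (lam t : R).

Lemma Pi_mass {P} : \sum_i a i = 1 -> Pi a b P -> \sum_i \sum_j P i j = 1.
Proof. by move=> <- [_ [rowP _]]; apply: eq_bigr => i _; apply: rowP. Qed.

Lemma Pi_segment {P P' t} : Pi a b P -> Pi a b P' -> 0 <= t -> t <= 1 ->
  Pi a b (P + t *: (P' - P)).
Proof.
move=> [P0 [rowP colP]] [P'0 [rowP' colP']] t0 t1; split; [|split].
- move=> i j; rewrite !mxE.
  have -> : P i j + t * (P' i j - P i j) = (1 - t) * P i j + t * P' i j by ring.
  by rewrite addr_ge0 ?mulr_ge0 // subr_ge0.
- move=> i; under eq_bigr do rewrite !mxE.
  by rewrite big_split /= -mulr_sumr sumrB rowP rowP' subrr mulr0 addr0.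
- move=> j; under eq_bigr do rewrite !mxE.
  by rewrite big_split /= -mulr_sumr sumrB colP colP' subrr mulr0 addr0.
Qed.

Lemma ent_objE lam C P :
  ent_obj lam C P = \sum_i \sum_j (C i j * P i j + lam * hent_term (P i j)).
Proof.
rewrite /ent_obj /frob /hent mulr_sumr -big_split; apply: eq_bigr => i _.
by rewrite mulr_sumr -big_split.
Qed.

Lemma is_Phi_variational {lam C P P' t} : 0 <= lam ->
  is_Phi a b lam C P -> Pi a b P' -> 0 < t < 1 ->
  0 <= \sum_i \sum_j (C i j + lam * ln ((P + t *: (P' - P)) i j)) * (P' i j - P i j).
Proof.
move=> lam0 [PPi Pmin] P'Pi t01; have /andP[t0 t1] := t01.
have := Pmin _ (Pi_segment PPi P'Pi (ltW t0) (ltW t1)).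
rewrite !ent_objE -subr_ge0 -sumrB => obj_le.
rewrite -(pmulr_rge0 _ t0) mulr_sumr; apply: le_trans obj_le _; apply: ler_sum => i _.
rewrite -sumrB mulr_sumr; apply: ler_sum => j _; rewrite !mxE.
have [[P0 _] [P'0 _]] := (PPi, P'Pi).
have := ler_wpM2l lam0 (hent_term_segment (P0 i j) (P'0 i j) t01).
set L := ln _; lra.
Qed.

Lemma is_Phi_strong_monotone {lam C1 C2 P1 P2 s} : \sum_i a i = 1 -> 0 < lam ->
  is_Phi a b lam C1 P1 -> is_Phi a b lam C2 P2 -> 0 < s < 1 ->
  lam * s * norm1 (P1 - P2) ^+ 2 <= - frob (C1 - C2) (P1 - P2).
Proof.
move=> a1 lam0 Phi1 Phi2 /andP[s0 s1].
have [[P1_ge0 _] [P2_ge0 _]] := (Phi1.1, Phi2.1).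
(* Mixing with [t > 0] keeps the logarithms finite wherever [P1] and [P2]
   differ, and [Q1 - Q2 = s (P1 - P2)]. *)
pose t := (1 - s) / 2; have t01 : 0 < t < 1 by rewrite /t; apply/andP; split; lra.
pose Q1 := P1 + t *: (P2 - P1); pose Q2 := P2 + t *: (P1 - P2).
have Q1Pi : Pi a b Q1 by apply: Pi_segment Phi1.1 Phi2.1 _ _; lra.
have Q2Pi : Pi a b Q2 by apply: Pi_segment Phi2.1 Phi1.1 _ _; lra.
have Q12 i j : Q1 i j - Q2 i j = s * (P1 i j - P2 i j) by rewrite !mxE /t; field.
pose L := \sum_p (P1 p.1 p.2 - P2 p.1 p.2) * (ln (Q1 p.1 p.2) - ln (Q2 p.1 p.2)).
have jeffreysQ : (s * norm1 (P1 - P2)) ^+ 2 <= s * L.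
  have -> : s * L = jeffreys (fun p => Q1 p.1 p.2) (fun p => Q2 p.1 p.2).
    by rewrite mulr_sumr; apply: eq_bigr => p _; rewrite Q12 mulrA.
  have -> : s * norm1 (P1 - P2) = \sum_p `|Q1 p.1 p.2 - Q2 p.1 p.2|.
    rewrite /norm1 pair_bigA mulr_sumr; apply: eq_bigr => p _.
    by rewrite Q12 normrM gtr0_norm // !mxE.
  apply: sqr_l1_le_jeffreys.
  - by move=> p; case: Q1Pi => + _; apply.
  - by move=> p; case: Q2Pi => + _; apply.
  - move=> [i j] /=; have [e|ne] := eqVneq (P1 i j) (P2 i j).
      by left; rewrite !mxE e.
    by right; rewrite !mxE; split; apply: segment_gt0; rewrite // eq_sym.
  - by rewrite -(Pi_mass a1 Q1Pi) pair_bigA.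
  - by rewrite -(Pi_mass a1 Q2Pi) pair_bigA.
have variational : lam * L <= - frob (C1 - C2) (P1 - P2).
  have := addr_ge0 (is_Phi_variational (ltW lam0) Phi1 Phi2.1 t01)
                   (is_Phi_variational (ltW lam0) Phi2 Phi1.1 t01).
  rewrite !pair_bigA -big_split /= => sum_ge0.
  rewrite -subr_ge0 /frob pair_bigA -sumrN mulr_sumr -sumrB.
  apply: le_trans sum_ge0 _; apply: ler_sum => p _; rewrite !mxE; lra.
rewrite -(ler_pM2l s0); apply: le_trans (ler_wpM2l (ltW s0) variational).
have := ler_wpM2l (ltW lam0) jeffreysQ; lra.
Qed.

End entropic_plans.

Theorem lemma1 (R : realType) (n m : nat) (a : 'I_n -> R) (b : 'I_m -> R)
  (lam : R) (C1 C2 P1 P2 : 'M[R]_(n, m)) :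
  simplex_pos a -> simplex_pos b -> 0 < lam ->
  is_Phi a b lam C1 P1 -> is_Phi a b lam C2 P2 ->
  norm1 (P1 - P2) <= norminf (C1 - C2) / lam.
Proof.
move=> [_ a1] _ lam0 Phi1 Phi2.
have quadratic : lam * norm1 (P1 - P2) ^+ 2 <= norminf (C1 - C2) * norm1 (P1 - P2).
  apply: le_of_forall_mulr_le => s s01; rewrite mulrA (mulrC s).
  apply: le_trans (is_Phi_strong_monotone a1 lam0 Phi1 Phi2 s01) _.
  by apply: le_trans (normr_frob_le _ _); rewrite -normrN ler_norm.
have [->|N_neq0] := eqVneq (norm1 (P1 - P2)) 0.
  by rewrite divr_ge0 ?norminf_ge0 ?ltW.
have N_gt0 : 0 < norm1 (P1 - P2) by rewrite lt_def N_neq0 norm1_ge0.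
by rewrite ler_pdivlMr // mulrC -(ler_pM2r N_gt0) -mulrA -expr2.
Qed.
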